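(* Let $\mathcal L$ be a factorial and almost prolongable language over a finite alphabet whose complexity function $p$ is unbounded and grows subexponentially. Then there exists an increasing sequence of positive integers $(n_d)_d$ such that the Rauzy graphs $R(n_d)$ converge to the line $\mathbf Z$ in the Benjamini–Schramm sense.
   Context: $\mathcal L_n=\mathcal L\cap\mathcal A^n$, $p(n)=|\mathcal L_n|$; $p$ grows subexponentially if $\lim_n\frac1n\log p(n)=0$. $\mathcal L$ is factorial if every subword of a word of $\mathcal L$ lies in $\mathcal L$. A word $v\in\mathcal L$ is left-prolongable (resp. right-prolongable) if $av\in\mathcal L$ (resp. $va\in\mathcal L$) for some letter $a$; $\mathcal L$ is almost prolongable if the proportions of left-prolongable and of right-prolongable words in $\mathcal L_n$ both tend to $1$. The Rauzy graph $R(n)$ has vertex set $\mathcal L_n$ and, for each $aub\in\mathcal L_{n+1}$ ($a,b$ letters), one edge between $au$ and $ub$ (loops and multiple edges allowed). Convergence to $\mathbf Z$ means: for each $r$, the proportion of vertices whose ball of radius $r$ is isomorphic to the ball of radius $r$ in the bi-infinite path tends to $1$. *)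

From HB Require Import structures.
From mathcomp Require Import all_boot all_order all_algebra.
From mathcomp Require Import boolp classical_sets reals topology normedtype
  sequences exp.
Set Implicit Arguments.
Unset Strict Implicit.
Unset Printing Implicit Defensive.
Import Order.TTheory GRing.Theory Num.Theory.
Import numFieldNormedType.Exports.
Local Open Scope classical_set_scope.
Local Open Scope ring_scope.

Section Lang.
Variable A : finType.
Variable L : pred (seq A).

Definition Ln (n : nat) : {set n.-tuple A} := [set t : n.-tuple A | L t].
Definition complexity (n : nat) : nat := #|Ln n|.

Definition factorial_language : Prop :=
  forall u v w : seq A, L (u ++ v ++ w) -> L v.

Definition left_prolongable (v : seq A) : bool := [exists a : A, L (a :: v)].
Definition right_prolongable (v : seq A) : bool := [exists a : A, L (rcons v a)].

Definition almost_prolongable (R : realType) : Prop :=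
  ((fun n : nat => (#|[set t in Ln n | left_prolongable t]|%:R
                    / (complexity n)%:R : R)) @ \oo --> (1 : R)) /\
  ((fun n : nat => (#|[set t in Ln n | right_prolongable t]|%:R
                    / (complexity n)%:R : R)) @ \oo --> (1 : R)).

Definition unbounded_complexity : Prop :=
  forall M : nat, exists n : nat, (M < complexity n)%N.

Definition subexponential (R : realType) : Prop :=
  (fun n : nat => (ln ((complexity n)%:R : R) / n%:R : R)) @ \oo --> (0 : R).
End Lang.

(* An undirected multigraph: each edge has two endpoints (src, tgt); the
   orientation is irrelevant (see adjacency and isomorphism below). *)
Record mgraph := MGraph {
  vert : Type;
  edge : Type;
  src : edge -> vert;
  tgt : edge -> vert }.

Definition adj (G : mgraph) (x y : vert G) : Prop :=
  exists e : edge G, (src e = x /\ tgt e = y) \/ (src e = y /\ tgt e = x).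

Fixpoint dist_le (G : mgraph) (r : nat) (x y : vert G) : Prop :=
  match r with
  | 0 => x = y
  | r'.+1 => @dist_le G r' x y \/ exists z, @dist_le G r' x z /\ @adj G z y
  end.

Lemma dist_le_refl (G : mgraph) (r : nat) (x : vert G) : @dist_le G r x x.
Proof. by elim: r => [|r IH] //=; left. Qed.

Definition rball (G : mgraph) (x : vert G) (r : nat) : mgraph :=
  @MGraph {y : vert G | @dist_le G r x y}
          {e : edge G | @dist_le G r x (src e) /\ @dist_le G r x (tgt e)}
          (fun e => exist _ (src (proj1_sig e)) (proj1 (proj2_sig e)))
          (fun e => exist _ (tgt (proj1_sig e)) (proj2 (proj2_sig e))).

Definition rball_root (G : mgraph) (x : vert G) (r : nat) : vert (rball x r) :=
  exist _ x (dist_le_refl r x).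

Definition rooted_iso (G1 : mgraph) (x1 : vert G1)
                      (G2 : mgraph) (x2 : vert G2) : Prop :=
  exists (f : vert G1 -> vert G2) (g : edge G1 -> edge G2),
    [/\ bijective f, bijective g, f x1 = x2 &
        forall e : edge G1,
          (src (g e) = f (src e) /\ tgt (g e) = f (tgt e)) \/
          (src (g e) = f (tgt e) /\ tgt (g e) = f (src e))].

Definition Zline : mgraph := @MGraph int int (fun i => i) (fun i => (i + 1)%R).

Section Rauzy.
Variable A : finType.
Variable L : pred (seq A).
Variable n : nat.

Definition rauzyV := {t : n.-tuple A | L t}.

(* for w = a u b in L_{n+1}:  au = wpre w,  ub = wsuf w *)
Definition wpre (t : n.+1.-tuple A) : n.-tuple A :=
  belast_tuple (thead t) (behead_tuple t).
Definition wsuf (t : n.+1.-tuple A) : n.-tuple A := behead_tuple t.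

(* Edges: words of L_{n+1} (whose prefix/suffix lie in L_n, which is
   automatic for a factorial language). *)
Definition rauzyE :=
  {t : n.+1.-tuple A | [&& L t, L (wpre t) & L (wsuf t)]}.

Lemma rauzy_src_proof (e : rauzyE) : L (wpre (proj1_sig e)).
Proof. by case: e => t /= /and3P[]. Qed.
Lemma rauzy_tgt_proof (e : rauzyE) : L (wsuf (proj1_sig e)).
Proof. by case: e => t /= /and3P[]. Qed.

Definition rauzy : mgraph :=
  @MGraph rauzyV rauzyE
    (fun e => exist _ (wpre (proj1_sig e)) (rauzy_src_proof e))
    (fun e => exist _ (wsuf (proj1_sig e)) (rauzy_tgt_proof e)).
End Rauzy.

Definition good_vertex (A : finType) (L : pred (seq A)) (n r : nat)
  (v : rauzyV L n) : Prop :=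
  rooted_iso (rball_root (G := rauzy L n) v r) (rball_root (G := Zline) 0%R r).

Definition good_proportion (R : realType) (A : finType) (L : pred (seq A))
  (n r : nat) : R :=
  #|[set v : rauzyV L n | `[< @good_vertex A L n r v >] ]|%:R / (complexity L n)%:R.

Definition rauzy_converges_to_Z (R : realType) (A : finType)
  (L : pred (seq A)) (nd : nat -> nat) : Prop :=
  forall r : nat,
    (fun d : nat => good_proportion R L (nd d) r) @ \oo --> (1 : R).

(* In the Rauzy graph R(n), seen as a directed graph, a vertex
   with in- and out-degree 1 whose word has no period <= 2r+2 looks locally like
   Z: following the unique edges gives a path, and a cycle of length l through
   a word w forces w to have period l. So every vertex at distance > r+1 from
   the "defective" vertices is good, and their r+1-neighbourhood has at most
   (2|A|+1)^(r+1) times as many vertices. A degree count bounds the vertices of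
   out-degree <> 1 by 2 #(non right-prolongable words) + p(n+1) - p(n) (and
   symmetrically), while there are at most (|A|+1)^l words with period l. Hence
   the proportion of bad vertices is O((p(n) - #prolongable)/p(n) +
   (p(n+1) - p(n))/p(n) + 1/p(n)). Subexponential growth provides infinitely
   many n with p(n+1) <= (1 + 1/(d+1)) p(n) and p(n) > d, and along such n_d
   all three terms tend to 0. *)

From mathcomp Require Import all_boot all_order all_algebra.
From mathcomp Require Import boolp classical_sets reals topology normedtype
  sequences exp.
From mathcomp Require Import zify ring lra.
Set Implicit Arguments.
Unset Strict Implicit.
Unset Printing Implicit Defensive.
Import Order.TTheory GRing.Theory Num.Theory.
Import numFieldNormedType.Exports.

Definition has_period (T : eqType) (l : nat) (s : seq T) : bool :=
  drop l s == take (size s - l) s.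

Lemma has_period_shift (T : eqType) (l : nat) (u s : seq T) :
  u = drop l (u ++ s) -> has_period l u.
Proof.
move=> E; apply/eqP; case: (leqP l (size u)) => h.
  by rewrite {3}E take_drop subnK // take_size_cat.
by rewrite drop_oversize ?(ltnW h) // (_ : size u - l = 0)%N ?take0 //; lia.
Qed.

Lemma eq_from_period (T : eqType) (l : nat) (s1 s2 : seq T) : (0 < l)%N ->
  size s1 = size s2 -> has_period l s1 -> has_period l s2 ->
  take l s1 = take l s2 -> s1 = s2.
Proof.
move=> l0 hs /eqP p1 /eqP p2 ht.
have take_period s : drop l s = take (size s - l) s -> forall m,
    take (l + m) s = take l s ++ take (minn m (size s - l)) s.
  by move=> E m; rewrite takeD E take_min.
suff H m : take m s1 = take m s2 by rewrite -(take_size s1) H hs take_size.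
elim: m {-2}m (leqnn m) => [|M IH] m hm; first by case: m hm => // _; rewrite !take0.
case: (leqP m l) => h.
  by rewrite -(take_takel s1 h) -(take_takel s2 h) ht.
rewrite (_ : m = l + (m - l))%N; last lia.
rewrite !take_period // ht hs; congr (_ ++ _); apply: IH; lia.
Qed.

Lemma proj1_sig_inj (T : Type) (P : T -> Prop) : injective (@proj1_sig T P).
Proof. exact: eq_sig_hprop (fun x => @Prop_irrelevance (P x)). Qed.

Lemma inj_surj_bijective (T U : Type) (f : T -> U) :
  injective f -> (forall u, exists t, f t = u) -> bijective f.
Proof.
move=> f_inj f_surj; pose g u := proj1_sig (cid (f_surj u)).
exists g => [t|u]; last exact: (proj2_sig (cid (f_surj u))).
by apply: f_inj; exact: (proj2_sig (cid (f_surj (f t)))).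
Qed.

Section Distance.
Variable G : mgraph.
Implicit Types x y z : vert G.

Lemma dist_le_mono k k' x y : (k <= k')%N -> dist_le k x y -> dist_le k' x y.
Proof.
elim: k' => [|k' IH] le_kk' H; first by case: k le_kk' H.
case: (leqP k k') => hk; first by left; exact: IH.
by rewrite (_ : k'.+1 = k) //; apply/eqP; rewrite eqn_leq le_kk' hk.
Qed.

Lemma adj_sym x y : adj x y -> adj y x.
Proof. by case=> e [[h1 h2]|[h1 h2]]; exists e; [right|left]. Qed.

Lemma dist_le_adjl k x y z : adj x y -> dist_le k y z -> dist_le k.+1 x z.
Proof.
elim: k z => [|k IH] z Hxy /=; first by move=> <-; right; exists x.
case=> [H|[w [H1 H2]]]; first by left; exact: IH.
by right; exists w; split => //; exact: IH.
Qed.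

Lemma dist_le_sym k x y : dist_le k x y -> dist_le k y x.
Proof.
elim: k x y => [|k IH] x y /=; first by move->.
case=> [H|[z [H1 H2]]]; first by left; exact: IH.
exact: dist_le_adjl (adj_sym H2) (IH _ _ H1).
Qed.
End Distance.

Lemma rooted_iso_sym (G1 : mgraph) (x1 : vert G1) (G2 : mgraph) (x2 : vert G2) :
  rooted_iso x1 x2 -> rooted_iso x2 x1.
Proof.
case=> f [g [[f' fK f'K] [g' gK g'K] fx H]].
exists f', g'; split; [by exists f|by exists g|by rewrite -fx fK|].
by move=> e; case: (H (g' e)); rewrite g'K => -[-> ->]; [left|right]; rewrite !fK.
Qed.

Lemma rooted_iso_trans (G1 : mgraph) (x1 : vert G1) (G2 : mgraph) (x2 : vert G2)
  (G3 : mgraph) (x3 : vert G3) :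
  rooted_iso x1 x2 -> rooted_iso x2 x3 -> rooted_iso x1 x3.
Proof.
case=> f [g [bf bg fx H]]; case=> f2 [g2 [bf2 bg2 f2x H2]].
exists (f2 \o f), (g2 \o g); split; [exact: bij_comp|exact: bij_comp|by rewrite /= fx|].
move=> e /=; case: (H2 (g e)) => -[-> ->]; case: (H e) => -[-> ->];
  by [left|right|right|left].
Qed.

(* Vertices are numbered from [1] so that they match the chain indices below. *)
Section PathGraph.
Variable r : nat.

Definition path_vert := {j : nat | (0 < j <= r + r + 1)%N}.
Definition path_edge := {j : nat | (0 < j <= r + r)%N}.

Lemma path_src_proof (e : path_edge) : (0 < proj1_sig e <= r + r + 1)%N.
Proof. by case/andP: (proj2_sig e) => ? ?; apply/andP; split; lia. Qed.

Lemma path_tgt_proof (e : path_edge) : (0 < (proj1_sig e).+1 <= r + r + 1)%N.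
Proof. by case/andP: (proj2_sig e) => ? ?; apply/andP; split; lia. Qed.

Definition path_graph : mgraph := @MGraph path_vert path_edge
  (fun e => exist _ (proj1_sig e) (path_src_proof e))
  (fun e => exist _ (proj1_sig e).+1 (path_tgt_proof e)).

Lemma path_root_proof : (0 < r.+1 <= r + r + 1)%N.
Proof. by apply/andP; split => //; lia. Qed.

Definition path_root : vert path_graph := exist _ r.+1 path_root_proof.
End PathGraph.

(* The chain [phi 0 -- ... -- phi (2r+2)] reaches one step beyond the r-ball of
   its midpoint on each side, so every edge at a vertex of the ball is a [psi j]. *)
Section ChainBall.
Variables (G : mgraph) (x : vert G) (r : nat) (phi : nat -> vert G)
  (psi : nat -> edge G).
Hypothesis phi_mid : phi r.+1 = x.
Hypothesis phi_inj : forall i j, (i <= r + r + 2)%N -> (j <= r + r + 2)%N ->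
  phi i = phi j -> i = j.
Hypothesis psi_src : forall j, (j <= r + r + 1)%N -> src (psi j) = phi j.
Hypothesis psi_tgt : forall j, (j <= r + r + 1)%N -> tgt (psi j) = phi j.+1.
Hypothesis src_phi : forall j e, (0 < j <= r + r + 1)%N ->
  src e = phi j -> e = psi j.
Hypothesis tgt_phi : forall j e, (0 < j <= r + r + 1)%N ->
  tgt e = phi j -> e = psi j.-1.

Lemma dist_le_chainP k y : (k <= r)%N -> dist_le k x y <->
  exists j, [/\ (r.+1 - k <= j)%N, (j <= r.+1 + k)%N & y = phi j].
Proof.
elim: k y => [|k IH] y hk /=.
  split; first by move=> <-; exists r.+1; rewrite subn0 addn0.
  by case=> j [h1 h2 ->]; rewrite (_ : j = r.+1) //; lia.
split=> [[H|[z [Hz [e [[E1 E2]|[E1 E2]]]]]]|[j [h1 h2 ->]]].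
- by have [j [h1 h2 ->]] := (IH y (ltnW hk)).1 H; exists j; split => //; lia.
- have [j [h1 h2 Ez]] := (IH z (ltnW hk)).1 Hz.
  have He : e = psi j by apply: src_phi; [apply/andP; split; lia|rewrite E1].
  by exists j.+1; split; [lia|lia|rewrite -E2 He psi_tgt //; lia].
- have [j [h1 h2 Ez]] := (IH z (ltnW hk)).1 Hz.
  have He : e = psi j.-1 by apply: tgt_phi; [apply/andP; split; lia|rewrite E2].
  by exists j.-1; split; [lia|lia|rewrite -E1 He psi_src //; lia].
case: (leqP (r.+1 - k) j) => a; case: (leqP j (r.+1 + k)) => b.
- by left; apply/(IH _ (ltnW hk)); exists j.
- right; exists (phi j.-1); split.
    by apply/(IH _ (ltnW hk)); exists j.-1; split => //; lia.
  exists (psi j.-1); left; split; first by apply: psi_src; lia.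
  by rewrite psi_tgt ?prednK //; lia.
- right; exists (phi j.+1); split.
    by apply/(IH _ (ltnW hk)); exists j.+1; split => //; lia.
  by exists (psi j); right; split; [apply: psi_src; lia|rewrite psi_tgt //; lia].
- lia.
Qed.

Lemma chain_in_ball j : (0 < j <= r + r + 1)%N -> dist_le r x (phi j).
Proof.
by case/andP=> h1 h2; apply/(dist_le_chainP _ (leqnn r)); exists j; split => //; lia.
Qed.

Lemma chain_edge_in_ball (e : path_edge r) :
  dist_le r x (src (psi (proj1_sig e))) /\ dist_le r x (tgt (psi (proj1_sig e))).
Proof.
case: e => j /= /andP[h1 h2]; rewrite psi_src ?psi_tgt; try lia.
by split; apply: chain_in_ball; apply/andP; split; lia.
Qed.

Definition chain_vert (v : path_vert r) : vert (rball x r) :=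
  exist _ (phi (proj1_sig v)) (chain_in_ball (proj2_sig v)).

Definition chain_edge (e : path_edge r) : edge (rball x r) :=
  exist _ (psi (proj1_sig e)) (chain_edge_in_ball e).

Lemma chain_ball_iso : rooted_iso (path_root r) (rball_root x r).
Proof.
exists (chain_vert : vert (path_graph r) -> _),
       (chain_edge : edge (path_graph r) -> _); split.
- apply: inj_surj_bijective.
    move=> [a ha] [b hb] /(congr1 (@proj1_sig _ _)) /= E.
    have /andP[? ?] := ha; have /andP[? ?] := hb.
    by apply: proj1_sig_inj; apply: phi_inj E; lia.
  move=> [y hy]; have [j [h1 h2 Ey]] := (dist_le_chainP _ (leqnn r)).1 hy.
  have hj : (0 < j <= r + r + 1)%N by apply/andP; split; lia.
  by exists (exist _ j hj); apply: proj1_sig_inj.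
- apply: inj_surj_bijective.
    move=> [a ha] [b hb] /(congr1 (@proj1_sig _ _)) /= E.
    have /andP[? ?] := ha; have /andP[? ?] := hb.
    apply: proj1_sig_inj => /=; apply: phi_inj; [lia|lia|].
    by have := congr1 (@src G) E; rewrite !psi_src //; lia.
  move=> [e [hs ht]].
  have [j [h1 h2 Ej]] := (dist_le_chainP _ (leqnn r)).1 hs.
  have [k [k1 k2 Ek]] := (dist_le_chainP _ (leqnn r)).1 ht.
  have He : e = psi j by apply: src_phi => //; apply/andP; split; lia.
  have Hjk : j.+1 = k by apply: phi_inj; [lia|lia|rewrite -Ek He psi_tgt //; lia].
  have hj : (0 < j <= r + r)%N by apply/andP; split; lia.
  by exists (exist _ j hj); apply: proj1_sig_inj.
- exact: proj1_sig_inj.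
move=> [j hj]; have /andP[? ?] := hj; left.
by split; apply: proj1_sig_inj; rewrite /= ?psi_src ?psi_tgt //; lia.
Qed.
End ChainBall.

Lemma Zline_ball_iso r : rooted_iso (path_root r) (rball_root (G := Zline) 0%R r).
Proof.
apply: (@chain_ball_iso Zline 0%R r (fun j => j%:Z - r.+1%:Z)%R
                                     (fun j => j%:Z - r.+1%:Z)%R) => //= *; lia.
Qed.

(* Near [x] every vertex has exactly one outgoing and one incoming edge, so
   following them from [x] traces a chain, which cannot close up since there is
   no short cycle. *)
Section RegularBall.
Variables (G : mgraph) (e0 : edge G).

(* [e0] is a junk value, returned when the vertex has no such edge. *)
Definition out_edge (u : vert G) : edge G :=
  if pselect (exists e, src e = u) is left h then proj1_sig (cid h) else e0.
Definition in_edge (u : vert G) : edge G :=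
  if pselect (exists e, tgt e = u) is left h then proj1_sig (cid h) else e0.

Definition succ_vert u := tgt (out_edge u).
Definition pred_vert u := src (in_edge u).

Definition regular (u : vert G) : Prop :=
  [/\ (exists e, src e = u), (exists e, tgt e = u),
      (forall e1 e2, src e1 = u -> src e2 = u -> e1 = e2) &
      (forall e1 e2, tgt e1 = u -> tgt e2 = u -> e1 = e2)].

Lemma out_edge_src u : (exists e, src e = u) -> src (out_edge u) = u.
Proof. by rewrite /out_edge; case: pselect => // h _; exact: proj2_sig (cid h). Qed.

Lemma in_edge_tgt u : (exists e, tgt e = u) -> tgt (in_edge u) = u.
Proof. by rewrite /in_edge; case: pselect => // h _; exact: proj2_sig (cid h). Qed.

Lemma out_edge_uniq u e : regular u -> src e = u -> e = out_edge u.
Proof. by case=> h1 _ h3 _ E; apply: h3 => //; apply: out_edge_src. Qed.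

Lemma in_edge_uniq u e : regular u -> tgt e = u -> e = in_edge u.
Proof. by case=> _ h2 _ h4 E; apply: h4 => //; apply: in_edge_tgt. Qed.

Lemma pred_vertK w : regular w -> regular (pred_vert w) ->
  succ_vert (pred_vert w) = w.
Proof.
move=> [_ hw _ _] rp; rewrite /succ_vert -(out_edge_uniq rp (erefl (pred_vert w))).
exact: in_edge_tgt.
Qed.

Variables (x : vert G) (r : nat).
Hypothesis ball_regular : forall u, dist_le r.+1 x u -> regular u.
Hypothesis no_short_cycle : forall u l, (0 < l <= r + r + 2)%N ->
  (forall k, (k <= l)%N -> dist_le r.+1 x (iter k succ_vert u)) ->
  iter l succ_vert u <> u.

Lemma pred_iter_near k : (k <= r.+1)%N -> dist_le k x (iter k pred_vert x).
Proof.
elim: k => [|k IH] hk //=; right; exists (iter k pred_vert x).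
split; first exact: IH (ltnW hk).
have [_ ? _ _] := ball_regular (dist_le_mono (ltnW hk) (IH (ltnW hk))).
by exists (in_edge (iter k pred_vert x)); right; rewrite in_edge_tgt.
Qed.

Lemma succ_iter_near k : (k <= r.+1)%N -> dist_le k x (iter k succ_vert x).
Proof.
elim: k => [|k IH] hk //=; right; exists (iter k succ_vert x).
split; first exact: IH (ltnW hk).
have [? _ _ _] := ball_regular (dist_le_mono (ltnW hk) (IH (ltnW hk))).
by exists (out_edge (iter k succ_vert x)); left; rewrite out_edge_src.
Qed.

Definition walk j := iter j succ_vert (iter r.+1 pred_vert x).

Lemma walk_pred_iter j : (j <= r.+1)%N -> walk j = iter (r.+1 - j) pred_vert x.
Proof.
elim: j => [|j IH] hj; first by rewrite subn0.
rewrite /walk iterS -/(walk j) IH ?(ltnW hj) //.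
rewrite (_ : r.+1 - j = (r - j).+1)%N; last lia.
rewrite (_ : r.+1 - j.+1 = r - j)%N; last lia.
rewrite iterS pred_vertK //; apply: ball_regular.
- by apply: (dist_le_mono (k := r - j)); [lia|apply: pred_iter_near; lia].
- by apply: (dist_le_mono (k := (r - j).+1)); [lia|apply: pred_iter_near; lia].
Qed.

Lemma walk_mid : walk r.+1 = x.
Proof. by rewrite walk_pred_iter // subnn. Qed.

Lemma walk_succ_iter m : walk (m + r.+1) = iter m succ_vert x.
Proof. by rewrite /walk iterD -/(walk r.+1) walk_mid. Qed.

Lemma walk_near j : (j <= r + r + 2)%N -> dist_le r.+1 x (walk j).
Proof.
move=> hj; case: (leqP j r.+1) => h.
  rewrite walk_pred_iter //; apply: (dist_le_mono (k := r.+1 - j)); first lia.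
  by apply: pred_iter_near; lia.
rewrite (_ : j = (j - r.+1) + r.+1)%N ?walk_succ_iter; last lia.
by apply: (dist_le_mono (k := j - r.+1)); [lia|apply: succ_iter_near; lia].
Qed.

Lemma walk_regular j : (j <= r + r + 2)%N -> regular (walk j).
Proof. by move=> hj; apply: ball_regular; apply: walk_near. Qed.

Lemma walk_inj i j : (i <= r + r + 2)%N -> (j <= r + r + 2)%N ->
  walk i = walk j -> i = j.
Proof.
wlog lij : i j / (i <= j)%N.
  move=> W hi hj E; case: (leqP i j) => h; first exact: W.
  by symmetry; apply: W => //; exact: ltnW.
move=> hi hj E; case: (ltngtP i j) lij => // hlt _; exfalso.
apply: (no_short_cycle (u := walk i) (l := j - i)).
- by apply/andP; split; lia.
- by move=> k hk; rewrite /walk -iterD; apply: walk_near; lia.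
by rewrite /walk -iterD subnK ?(ltnW hlt) // -/(walk j) E.
Qed.

Lemma regular_ball_iso : rooted_iso (path_root r) (rball_root x r).
Proof.
apply: (@chain_ball_iso G x r walk (fun j => out_edge (walk j))).
- exact: walk_mid.
- exact: walk_inj.
- by move=> j hj; have [? _ _ _] := walk_regular (j := j) ltac:(lia);
    rewrite out_edge_src.
- by [].
- by move=> j e /andP[_ hj] E; apply: out_edge_uniq => //; apply: walk_regular; lia.
- move=> j e /andP[h0 hj] E.
  have Rj := walk_regular (j := j) ltac:(lia).
  rewrite (in_edge_uniq Rj E); symmetry; apply: in_edge_uniq => //.
  by rewrite -/(succ_vert _) /walk -iterS prednK.
Qed.
End RegularBall.

Section RauzyLocal.
Variables (A : finType) (L : pred (seq A)) (n : nat).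
Local Notation V := (rauzyV L n).
Local Notation E := (rauzyE L n).
Local Notation RG := (rauzy L n).

Definition rauzy_src (e : E) : V := src (m := RG) e.
Definition rauzy_tgt (e : E) : V := tgt (m := RG) e.
Definition tlast (t : n.+1.-tuple A) : A := last (thead t) (behead t).

Lemma wpre_rcons (t : n.+1.-tuple A) : (t : seq A) = rcons (wpre t) (tlast t).
Proof. by rewrite {1}(tuple_eta t) /= lastI. Qed.

Lemma wsuf_cons (t : n.+1.-tuple A) : (t : seq A) = thead t :: wsuf t.
Proof. by rewrite {1}(tuple_eta t). Qed.

Lemma succ_vert_shift (e0 : E) (w : V) : regular (G := RG) w ->
  exists b, (proj1_sig (succ_vert (G := RG) e0 w) : seq A) = behead (rcons (proj1_sig w) b).
Proof.
move=> [hw _ _ _]; exists (tlast (proj1_sig (out_edge (G := RG) e0 w))).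
by rewrite /succ_vert -{2}(out_edge_src (G := RG) e0 hw) /= -wpre_rcons.
Qed.

Lemma succ_iter_shift (e0 : E) (u : V) k :
  (forall i, (i < k)%N -> regular (G := RG) (iter i (succ_vert (G := RG) e0) u)) ->
  exists s : seq A, size s = k /\
    (proj1_sig (iter k (succ_vert (G := RG) e0) u) : seq A) = drop k (proj1_sig u ++ s).
Proof.
elim: k => [|k IH] H; first by exists [::]; rewrite cats0 drop0.
have [s [Ss Es]] := IH (fun i hi => H i (ltnW hi)).
have [b Eb] := succ_vert_shift e0 (H k (ltnSn k)).
exists (rcons s b); split; first by rewrite size_rcons Ss.
rewrite iterS Eb Es -rcons_cat -drop_rcons; last by rewrite size_cat Ss; lia.
by rewrite -drop1 drop_drop add1n.
Qed.

Definition out_edges (u : V) : {set E} := [set e | rauzy_src e == u].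
Definition in_edges (u : V) : {set E} := [set e | rauzy_tgt e == u].

Lemma regular_of_degree1 (u : V) :
  #|out_edges u| == 1%N -> #|in_edges u| == 1%N -> regular (G := RG) u.
Proof.
move=> /cards1P[e Ho] /cards1P[f Hi].
have out_eq (e' : E) : rauzy_src e' = u -> e' = e.
  by move=> h; apply/set1P; rewrite -Ho inE; apply/eqP.
have in_eq (e' : E) : rauzy_tgt e' = u -> e' = f.
  by move=> h; apply/set1P; rewrite -Hi inE; apply/eqP.
split.
- by exists e; have := set11 e; rewrite -Ho inE => /eqP.
- by exists f; have := set11 f; rewrite -Hi inE => /eqP.
- by move=> e1 e2 /out_eq -> /out_eq ->.
- by move=> e1 e2 /in_eq -> /in_eq ->.
Qed.

(* Short periods are included because a short cycle of the successor map
   produces one (see [good_vertex_far]). *)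
Definition defective r : {set V} :=
  [set u | [|| #|out_edges u| != 1%N, #|in_edges u| != 1%N |
              has (fun l => has_period l (proj1_sig u : seq A)) (iota 1 (r + r + 2))]].

Fixpoint near_defective r k : {set V} :=
  if k is k'.+1 then
    near_defective r k' :|: (rauzy_tgt @: [set e | rauzy_src e \in near_defective r k'])
                        :|: (rauzy_src @: [set e | rauzy_tgt e \in near_defective r k'])
  else defective r.

Lemma mem_near_defective r k (u v : V) :
  u \in defective r -> dist_le (G := RG) k u v -> v \in near_defective r k.
Proof.
elim: k v => [|k IH] v hu /=; first by move=> <-.
case=> [H|[z [Hz [e [[E1 E2]|[E1 E2]]]]]].
- by rewrite !inE IH.
- apply/setUP; left; apply/setUP; right; apply/imsetP; exists e => //.
  by rewrite inE /rauzy_src E1; exact: IH.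
- apply/setUP; right; apply/imsetP; exists e => //.
  by rewrite inE /rauzy_tgt E2; exact: IH.
Qed.

Lemma good_vertex_far r (v : V) :
  v \notin near_defective r r.+1 -> @good_vertex A L n r v.
Proof.
move=> hv.
have nondef u : dist_le (G := RG) r.+1 v u -> u \notin defective r.
  move=> hu; apply: contra hv => hdef.
  exact: mem_near_defective hdef (dist_le_sym hu).
have ball_regular u : dist_le (G := RG) r.+1 v u -> regular (G := RG) u.
  by move/nondef; rewrite inE !negb_or !negbK => /and3P[h1 h2 _]; apply: regular_of_degree1.
have [[e0 _] _ _ _] := ball_regular v (dist_le_refl _ _).
suff no_cycle u l : (0 < l <= r + r + 2)%N ->
    (forall k, (k <= l)%N -> dist_le (G := RG) r.+1 v (iter k (succ_vert (G := RG) e0) u)) ->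
    iter l (succ_vert (G := RG) e0) u <> u.
  exact: rooted_iso_trans (rooted_iso_sym (regular_ball_iso ball_regular no_cycle))
                          (Zline_ball_iso r).
move=> /andP[l0 hl] near E.
have [s [_ Es]] := succ_iter_shift (fun i hi => ball_regular _ (near i (ltnW hi))).
move: (nondef u (near 0%N (leq0n _))); rewrite E in Es; apply/negP/negPn.
rewrite inE; apply/orP; right; apply/orP; right.
by apply/hasP; exists l; [rewrite mem_iota; lia|exact: has_period_shift Es].
Qed.
End RauzyLocal.

Lemma card_set_predC (T : finType) (b : pred T) :
  (#|[set u | b u]| + #|[set u | ~~ b u]| = #|T|)%N.
Proof. by rewrite -(cardC b); congr (_ + _); apply: eq_card => u; rewrite !inE. Qed.

Lemma sum_nat_of_bool (T : finType) (b : pred T) :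
  (\sum_(u : T) (b u : nat) = #|[set u | b u]|)%N.
Proof.
by rewrite -sum1dep_card [in RHS]big_mkcond; apply: eq_bigr => u _; case: (b u).
Qed.

(* Each vertex of degree [o u <> 1] either has degree 0 or contributes an
   excess [o u - 1 >= 1] to the total degree. *)
Lemma card_neq1_le (T : finType) (o : T -> nat) :
  (#|[set u | o u != 1%N]| + #|T| <= 2 * #|[set u | o u == 0%N]| + \sum_(u : T) o u)%N.
Proof.
have deg_ge : (\sum_(u : T) ((o u != 0%N : nat) + (1 < o u : nat)) <= \sum_(u : T) o u)%N.
  by apply: leq_sum => u _; case: (o u) => [|[|k]].
rewrite big_split /= !sum_nat_of_bool in deg_ge.
have := card_set_predC (fun u => o u == 0%N).
have : (#|[set u | o u != 1%N]| <= #|[set u | o u == 0%N]| + #|[set u | 1 < o u]|)%N.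
  apply: leq_trans (leq_card_setU _ _).1; apply: subset_leq_card.
  by apply/fintype.subsetP => u; rewrite !inE; case: (o u) => [|[|k]].
lia.
Qed.

Lemma card_has_le (T : finType) (Q : nat -> pred T) (s : seq nat) :
  (#|[set u | has (fun l => Q l u) s]| <= \sum_(l <- s) #|[set u | Q l u]|)%N.
Proof.
elim: s => [|x s IH].
  by rewrite big_nil leqn0 cards_eq0; apply/eqP/finset.setP => u; rewrite !inE.
rewrite big_cons; apply: leq_trans (leq_add (leqnn _) IH).
apply: leq_trans (leq_card_setU _ _).1; apply: subset_leq_card.
by apply/fintype.subsetP => u; rewrite !inE.
Qed.

Definition periodic_bound (A : finType) r := (\sum_(l <- iota 1 (r + r + 2)) #|A|.+1 ^ l)%N.

Definition prolongable_defect (A : finType) (L : pred (seq A)) n :=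
  (complexity L n - #|[set t in Ln L n | right_prolongable L t]| +
  (complexity L n - #|[set t in Ln L n | left_prolongable L t]|))%N.

Definition bad_vertex_bound (A : finType) (L : pred (seq A)) r n :=
  ((#|A| + #|A|).+1 ^ r.+1 * (2 * prolongable_defect L n +
      2 * (complexity L n.+1 - complexity L n) + periodic_bound A r))%N.

Section RauzyCount.
Variables (A : finType) (L : pred (seq A)) (n : nat).
Hypothesis L_factorial : factorial_language L.
Local Notation V := (rauzyV L n).
Local Notation E := (rauzyE L n).
Local Notation p := (complexity L n).

Lemma L_wpre (t : n.+1.-tuple A) : L t -> L (wpre t).
Proof. by move=> h; apply: (@L_factorial [::] _ [:: tlast t]); rewrite cats1 -wpre_rcons. Qed.

Lemma L_wsuf (t : n.+1.-tuple A) : L t -> L (wsuf t).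
Proof. by move=> h; apply: (@L_factorial [:: thead t] _ [::]); rewrite cats0 /= -wsuf_cons. Qed.

Lemma card_rauzyV_set (P : pred (n.-tuple A)) :
  #|[set u : V | P (proj1_sig u)]| = #|[set t in Ln L n | P t]|.
Proof.
rewrite -(card_imset _ (@proj1_sig_inj _ _)); apply: eq_card => t; rewrite !inE.
apply/imsetP/andP => [[u hu ->]|[h1 h2]].
  by rewrite inE in hu; split => //; exact: proj2_sig u.
by exists (exist _ t h1) => //; rewrite inE.
Qed.

Lemma card_rauzyV : #|{: V}| = p.
Proof. by rewrite card_sig /complexity /Ln; apply: eq_card => t; rewrite !inE. Qed.

Lemma card_rauzyE : #|{: E}| = complexity L n.+1.
Proof.
rewrite card_sig /complexity /Ln; apply: eq_card => t; rewrite !inE.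
by case h: (L t) => //=; rewrite L_wpre ?L_wsuf.
Qed.

Lemma sum_card_out_edges : (\sum_(u : V) #|out_edges u| = complexity L n.+1)%N.
Proof.
rewrite -card_rauzyE -sum1_card (partition_big (@rauzy_src A L n) xpredT) //=.
by apply: eq_bigr => u _; rewrite sum1dep_card; apply: eq_card => e; rewrite !inE.
Qed.

Lemma sum_card_in_edges : (\sum_(u : V) #|in_edges u| = complexity L n.+1)%N.
Proof.
rewrite -card_rauzyE -sum1_card (partition_big (@rauzy_tgt A L n) xpredT) //=.
by apply: eq_bigr => u _; rewrite sum1dep_card; apply: eq_card => e; rewrite !inE.
Qed.

Lemma rauzy_edge_rcons (u : V) a : L (rcons (proj1_sig u) a) ->
  exists2 e : E, rauzy_src e = u & tlast (proj1_sig e) = a.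
Proof.
move=> ha; pose t : n.+1.-tuple A := [tuple of rcons (proj1_sig u) a].
have ht : [&& L t, L (wpre t) & L (wsuf t)] by rewrite ha L_wpre ?L_wsuf.
have /rcons_inj[Epre Elast] : rcons (proj1_sig u : seq A) a = rcons (wpre t) (tlast t).
  exact: wpre_rcons t.
exists (exist _ t ht) => //.
by apply: proj1_sig_inj; apply: val_inj; rewrite /= -Epre.
Qed.

Lemma rauzy_edge_cons (u : V) a : L (a :: proj1_sig u) ->
  exists2 e : E, rauzy_tgt e = u & thead (proj1_sig e) = a.
Proof.
move=> ha; pose t : n.+1.-tuple A := [tuple of a :: proj1_sig u].
have ht : [&& L t, L (wpre t) & L (wsuf t)] by rewrite ha L_wpre ?L_wsuf.
by exists (exist _ t ht) => //; apply: proj1_sig_inj; apply: val_inj.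
Qed.

Lemma out_edges_eq0 (u : V) :
  (#|out_edges u| == 0%N) = ~~ right_prolongable L (proj1_sig u : seq A).
Proof.
rewrite cards_eq0; apply/eqP/negP => [h0 /existsP[a /rauzy_edge_rcons[e he _]]|hn].
  by have : e \in out_edges u; [rewrite inE he|rewrite h0 inE].
apply/finset.setP => e; rewrite !inE; apply/negP => /eqP he; apply: hn.
apply/existsP; exists (tlast (proj1_sig e)); rewrite -he /= -wpre_rcons.
by case/and3P: (proj2_sig e).
Qed.

Lemma in_edges_eq0 (u : V) :
  (#|in_edges u| == 0%N) = ~~ left_prolongable L (proj1_sig u : seq A).
Proof.
rewrite cards_eq0; apply/eqP/negP => [h0 /existsP[a /rauzy_edge_cons[e he _]]|hn].
  by have : e \in in_edges u; [rewrite inE he|rewrite h0 inE].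
apply/finset.setP => e; rewrite !inE; apply/negP => /eqP he; apply: hn.
apply/existsP; exists (thead (proj1_sig e)); rewrite -he /= -wsuf_cons.
by case/and3P: (proj2_sig e).
Qed.

Lemma card_out_degree_neq1 :
  (#|[set u : V | #|out_edges u| != 1%N]| <=
   2 * (p - #|[set t in Ln L n | right_prolongable L t]|) + (complexity L n.+1 - p))%N.
Proof.
have : (#|[set u : V | #|out_edges u| != 1%N]| + p <=
          2 * #|[set u : V | #|out_edges u| == 0%N]| + complexity L n.+1)%N.
  by have := card_neq1_le (fun u : V => #|out_edges u|);
    rewrite sum_card_out_edges card_rauzyV.
have : (#|[set u : V | #|out_edges u| == 0%N]| +
          #|[set t in Ln L n | right_prolongable L t]| = p)%N.
  rewrite -(card_rauzyV_set (fun t => right_prolongable L t)) -card_rauzyV addnC.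
  rewrite -(card_set_predC (fun u : V => right_prolongable L (proj1_sig u))).
  by congr (_ + _); apply: eq_card => u; rewrite !inE out_edges_eq0.
lia.
Qed.

Lemma card_in_degree_neq1 :
  (#|[set u : V | #|in_edges u| != 1%N]| <=
   2 * (p - #|[set t in Ln L n | left_prolongable L t]|) + (complexity L n.+1 - p))%N.
Proof.
have : (#|[set u : V | #|in_edges u| != 1%N]| + p <=
          2 * #|[set u : V | #|in_edges u| == 0%N]| + complexity L n.+1)%N.
  by have := card_neq1_le (fun u : V => #|in_edges u|);
    rewrite sum_card_in_edges card_rauzyV.
have : (#|[set u : V | #|in_edges u| == 0%N]| +
          #|[set t in Ln L n | left_prolongable L t]| = p)%N.
  rewrite -(card_rauzyV_set (fun t => left_prolongable L t)) -card_rauzyV addnC.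
  rewrite -(card_set_predC (fun u : V => left_prolongable L (proj1_sig u))).
  by congr (_ + _); apply: eq_card => u; rewrite !inE in_edges_eq0.
lia.
Qed.

Lemma card_edges_from (S : {set V}) :
  (#|[set e : E | rauzy_src e \in S]| <= #|S| * #|A|)%N.
Proof.
have inj : injective (fun e : E => (rauzy_src e, tlast (proj1_sig e))).
  move=> e1 e2 [h1 h2]; apply: proj1_sig_inj; apply: val_inj.
  by rewrite /= wpre_rcons [RHS]wpre_rcons h2; congr rcons; exact: h1.
rewrite -(card_imset _ inj) -[#|A|]cardsT -cardsX.
apply: subset_leq_card; apply/fintype.subsetP => _ /imsetP[e he ->].
by rewrite !inE in he *; rewrite he.
Qed.

Lemma card_edges_to (S : {set V}) :
  (#|[set e : E | rauzy_tgt e \in S]| <= #|S| * #|A|)%N.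
Proof.
have inj : injective (fun e : E => (rauzy_tgt e, thead (proj1_sig e))).
  move=> e1 e2 [h1 h2]; apply: proj1_sig_inj; apply: val_inj.
  by rewrite /= wsuf_cons [RHS]wsuf_cons h2; congr cons; exact: h1.
rewrite -(card_imset _ inj) -[#|A|]cardsT -cardsX.
apply: subset_leq_card; apply/fintype.subsetP => _ /imsetP[e he ->].
by rewrite !inE in he *; rewrite he.
Qed.

Lemma card_near_defective r k :
  (#|near_defective L n r k| <= (#|A| + #|A|).+1 ^ k * #|defective L n r|)%N.
Proof.
elim: k => [|k IH] /=; first by rewrite expn0 mul1n.
set N := near_defective L n r k.
have out_le := leq_trans (leq_imset_card (@rauzy_tgt A L n) _) (card_edges_from N).
have in_le := leq_trans (leq_imset_card (@rauzy_src A L n) _) (card_edges_to N).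
apply: leq_trans (leq_card_setU _ _).1 _.
apply: leq_trans (leq_add (leq_card_setU _ _).1 in_le) _.
apply: leq_trans (leq_add (leq_add (leqnn _) out_le) (leqnn _)) _.
rewrite expnS -mulnA; apply: leq_trans (leq_mul (leqnn _) IH).
by rewrite mulSn mulnDl (mulnC #|A|) addnA.
Qed.

Lemma card_periodic l : (0 < l)%N ->
  (#|[set u : V | has_period l (proj1_sig u : seq A)]| <= #|A|.+1 ^ l)%N.
Proof.
move=> l0; apply: (@leq_trans #|{: (minn l n).-tuple A}|).
  rewrite -(card_in_imset (f := fun u : V => take_tuple l (proj1_sig u))).
    exact: max_card.
  move=> u1 u2; rewrite !inE => p1 p2 /(congr1 val) /= E.
  apply: proj1_sig_inj; apply: val_inj; apply: eq_from_period l0 _ p1 p2 E.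
  by rewrite !size_tuple.
rewrite card_tuple; case: (posnP (minn l n)) => [->|m0]; first by rewrite expn_gt0.
apply: (@leq_trans (#|A|.+1 ^ minn l n)); first by rewrite leq_exp2r.
by apply: leq_pexp2l => //; exact: geq_minl.
Qed.

Lemma card_defective r : (#|defective L n r| <= #|[set u : V | #|out_edges u| != 1%N]| +
   #|[set u : V | #|in_edges u| != 1%N]| + periodic_bound A r)%N.
Proof.
have per_le : (\sum_(l <- iota 1 (r + r + 2))
      #|[set u : V | has_period l (proj1_sig u : seq A)]| <= periodic_bound A r)%N.
  rewrite /periodic_bound !big_seq; apply: leq_sum => l.
  by rewrite mem_iota => /andP[l0 _]; exact: card_periodic.
have := card_has_le (fun l (u : V) => has_period l (proj1_sig u : seq A))
                    (iota 1 (r + r + 2)).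
move/leq_trans/(_ per_le) => has_le.
apply: leq_trans (leq_add (leq_card_setU _ _).1 has_le).
apply: leq_trans (leq_card_setU _ _).1; apply: subset_leq_card.
by apply/fintype.subsetP => u; rewrite !inE orbA.
Qed.

Lemma card_good_vertex r :
  (p <= #|[set v : V | `[< @good_vertex A L n r v >] ]%classic| +
        bad_vertex_bound L r n)%N.
Proof.
have far_good : (#|~: near_defective L n r r.+1| <=
                 #|[set v : V | `[< @good_vertex A L n r v >] ]%classic|)%N.
  apply: subset_leq_card; apply/fintype.subsetP => v; rewrite inE => hv.
  by apply/mem_set/asboolP; apply: good_vertex_far.
have defective_le : (#|defective L n r| <= 2 * prolongable_defect L n +
      2 * (complexity L n.+1 - p) + periodic_bound A r)%N.
  have := card_defective r; have := card_out_degree_neq1;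
    have := card_in_degree_neq1; rewrite /prolongable_defect; lia.
have := leq_trans (card_near_defective r r.+1) (leq_mul (leqnn _) defective_le).
have := cardsC (near_defective L n r r.+1); rewrite card_rauzyV /bad_vertex_bound; lia.
Qed.
End RauzyCount.

Local Open Scope ring_scope.

Section ComplexityGrowth.
Variables (A : finType) (L : pred (seq A)).

Lemma card_Ln_sub n (P : pred (n.-tuple A)) :
  (#|[set t in Ln L n | P t]| <= complexity L n)%N.
Proof. by apply: subset_leq_card; apply/fintype.subsetP => t; rewrite inE => /andP[]. Qed.

(* Asking for [complexity L n] above the sum of its first [N] values forces [n >= N]. *)
Lemma exists_complexity_gt : unbounded_complexity L ->
  forall M N, exists2 n, (N <= n)%N & (M < complexity L n)%N.
Proof.
move=> L_unbounded M N.
have [n hn] := L_unbounded (M + \sum_(k < N) complexity L k)%N.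
exists n; last lia.
case: (leqP N n) => // hnN.
have : (complexity L n <= \sum_(k < N) complexity L k)%N.
  by rewrite (bigD1 (Ordinal hnN)) //= leq_addr.
lia.
Qed.

Lemma complexity_not_geometric (R : realType) : subexponential L R ->
  forall (q : R) n0, 1 < q -> ~ (forall k, q ^+ k <= (complexity L (n0 + k))%:R).
Proof.
move=> /cvgrPdist_lt L_subexp q n0 q1 geometric.
have lnq0 : 0 < ln q by apply: ln_gt0.
have [M _ HM] := L_subexp (ln q / 2) ltac:(by rewrite divr_gt0).
pose k := (M + n0).+1.
have := HM (n0 + k)%N ltac:(rewrite /k /=; lia).
rewrite /= sub0r normrN => small.
have q0 : 0 < q by apply: lt_trans q1.
have p0 : 0 < (complexity L (n0 + k))%:R :> R.
  by apply: lt_le_trans (geometric k); apply: exprn_gt0.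
have ln_ge : ln q * k%:R <= ln (complexity L (n0 + k))%:R.
  by rewrite mulr_natr -lnXn // ler_ln ?posrE ?exprn_gt0.
have nk0 : 0 < (n0 + k)%:R :> R by rewrite ltr0n; lia.
have nk_le : (n0 + k)%:R <= 2 * k%:R :> R by rewrite -natrM ler_nat; lia.
have ln_lt : ln (complexity L (n0 + k))%:R < ln q / 2 * (n0 + k)%:R.
  by rewrite -ltr_pdivrMr //; apply: le_lt_trans small; apply: ler_norm.
nra.
Qed.

(* If [p(n+1) > (1 + 1/(d+1)) p(n)] held from some large enough [n] on, [p]
   would grow geometrically. *)
Lemma exists_slow_growth (R : realType) :
  unbounded_complexity L -> subexponential L R ->
  forall d N, exists2 n, (N <= n)%N & (d.+1 <= complexity L n)%N /\
     (d.+1 * complexity L n.+1 <= d.+2 * complexity L n)%N.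
Proof.
move=> L_unbounded L_subexp d N; apply: contrapT => none.
have fast n : (N <= n)%N -> (d.+1 <= complexity L n)%N ->
    (d.+2 * complexity L n < d.+1 * complexity L n.+1)%N.
  by move=> h1 h2; rewrite ltnNge; apply/negP => h3; apply: none; exists n.
have [n0 n0N pn0] := exists_complexity_gt L_unbounded d N.
pose q : R := d.+2%:R / d.+1%:R.
have q0 : 0 <= q by rewrite divr_ge0.
apply: (complexity_not_geometric L_subexp (q := q) (n0 := n0)).
  by rewrite ltr_pdivlMr ?ltr0n // mul1r ltr_nat.
suff growth k : (d.+1 <= complexity L (n0 + k))%N /\
                q ^+ k <= (complexity L (n0 + k))%:R.
  by move=> k; case: (growth k).
elim: k => [|k [IH1 IH2]]; first by rewrite addn0 expr0 ler1n; split; lia.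
have := fast (n0 + k)%N ltac:(lia) IH1; rewrite addnS => Hk; split; first nia.
rewrite exprS; apply: le_trans (ler_wpM2l q0 IH2) _.
rewrite /q mulrAC ler_pdivrMr ?ltr0n // -!natrM ler_nat mulnC; lia.
Qed.
End ComplexityGrowth.

Lemma increasing_choice (P : nat -> nat -> Prop) :
  (forall d N, exists2 n, (N <= n)%N & P d n) ->
  exists nd : nat -> nat, [/\ forall d, (d < nd d)%N,
                              forall d, (nd d < nd d.+1)%N & forall d, P d (nd d)].
Proof.
move=> HP; pose g d N := proj1_sig (cid2 (HP d N)).
have gP d N : (N <= g d N)%N /\ P d (g d N) by rewrite /g; case: cid2.
pose nd := fix nd d := if d is d'.+1 then g d (nd d').+1 else g 0%N 1%N.
have nd_incr d : (nd d < nd d.+1)%N by case: (gP d.+1 (nd d).+1).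
exists nd; split => // [d|[|d]]; last 2 first.
- by case: (gP 0%N 1%N).
- by case: (gP d.+1 (nd d).+1).
elim: d => [|d IH]; first by case: (gP 0%N 1%N).
exact: leq_ltn_trans IH (nd_incr d).
Qed.

Local Open Scope classical_set_scope.
Local Open Scope ring_scope.

Lemma cvgn_subseq (R : realType) (u : R ^nat) (l : R) (nd : nat -> nat) :
  (forall d, (d <= nd d)%N) -> u @ \oo --> l -> (fun d => u (nd d)) @ \oo --> l.
Proof.
move=> nd_ge /cvgrPdist_lt u_cvg; apply/cvgrPdist_lt => e e0.
have [N _ HN] := u_cvg e e0; exists N => // d /= hd.
by apply: HN; exact: leq_trans hd (nd_ge d).
Qed.

Lemma cvg0_le_harmonic (R : realType) (f : R ^nat) (M : R) :
  (forall d, 0 <= f d <= M / d.+1%:R) -> f @ \oo --> 0.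
Proof.
move=> f_le; apply: (@squeeze_cvgr _ _ _ _ (fun=> 0) (fun d => M / d.+1%:R)).
- exact: nearW.
- exact: cvg_cst.
by rewrite -(mulr0 M); apply: cvgMl_tmp; exact: cvg_harmonic.
Qed.

Lemma ler_pdiv_nat (R : realType) (x y p q : nat) : (0 < p)%N -> (0 < q)%N ->
  (x * q <= y * p)%N -> x%:R / p%:R <= y%:R / q%:R :> R.
Proof.
move=> p0 q0 h.
by rewrite ler_pdivrMr ?ltr0n // mulrAC ler_pdivlMr ?ltr0n // -!natrM ler_nat.
Qed.

Section GoodProportion.
Variables (R : realType) (A : finType) (L : pred (seq A)) (nd : nat -> nat).
Hypothesis L_factorial : factorial_language L.
Hypothesis L_almost_prolongable : almost_prolongable L R.
Hypothesis nd_ge : forall d, (d <= nd d)%N.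
Hypothesis nd_complexity : forall d, (d.+1 <= complexity L (nd d))%N.
Hypothesis nd_slow : forall d,
  (d.+1 * complexity L (nd d).+1 <= d.+2 * complexity L (nd d))%N.

Local Notation p d := (complexity L (nd d)).

Lemma good_proportion_bounds n r : (0 < complexity L n)%N ->
  1 - (bad_vertex_bound L r n)%:R / (complexity L n)%:R <= good_proportion R L n r <= 1.
Proof.
move=> p0; rewrite /good_proportion; apply/andP; split.
  rewrite lerBlDr -mulrDl ler_pdivlMr ?ltr0n // mul1r -natrD ler_nat.
  exact: card_good_vertex.
rewrite ler_pdivrMr ?ltr0n // mul1r ler_nat -card_rauzyV; exact: max_card.
Qed.

Lemma prolongable_defect_ratio_cvg0 :
  (fun d => (prolongable_defect L (nd d))%:R / (p d)%:R) @ \oo --> (0 : R).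
Proof.
case: L_almost_prolongable => left_cvg right_cvg.
have defect_cvg0 (P : forall n, pred (n.-tuple A)) :
    (fun n => #|[set t in Ln L n | P n t]|%:R / (complexity L n)%:R) @ \oo --> (1 : R) ->
    (fun d => (p d - #|[set t in Ln L (nd d) | P (nd d) t]|)%N%:R / (p d)%:R)
      @ \oo --> (0 : R).
  move=> P_cvg; rewrite -(subrr 1).
  have -> : (fun d => (p d - #|[set t in Ln L (nd d) | P (nd d) t]|)%N%:R / (p d)%:R : R) =
            (fun d => 1 - #|[set t in Ln L (nd d) | P (nd d) t]|%:R / (p d)%:R).
    apply: funext => d; rewrite natrB ?card_Ln_sub // mulrBl divff //.
    by rewrite pnatr_eq0 -lt0n; apply: leq_trans (nd_complexity d).
  exact: cvgB (cvg_cst _) (cvgn_subseq nd_ge P_cvg).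
rewrite -(addr0 0) /prolongable_defect.
under eq_cvg do rewrite natrD mulrDl.
exact: cvgD (defect_cvg0 _ right_cvg) (defect_cvg0 _ left_cvg).
Qed.

Lemma bad_vertex_ratio_cvg0 r :
  (fun d => (bad_vertex_bound L r (nd d))%:R / (p d)%:R) @ \oo --> (0 : R).
Proof.
have growth_cvg0 :
    (fun d => (complexity L (nd d).+1 - p d)%N%:R / (p d)%:R) @ \oo --> (0 : R).
  apply: (@cvg0_le_harmonic _ _ 1%:R) => d; rewrite divr_ge0 //=.
  apply: ler_pdiv_nat => //; first exact: leq_trans (nd_complexity d).
  by have := nd_slow d; nia.
have period_cvg0 : (fun d => (periodic_bound A r)%:R / (p d)%:R) @ \oo --> (0 : R).
  apply: (@cvg0_le_harmonic _ _ (periodic_bound A r)%:R) => d; rewrite divr_ge0 //=.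
  apply: ler_pdiv_nat => //; first exact: leq_trans (nd_complexity d).
  exact: leq_mul (leqnn _) (nd_complexity d).
pose c := ((#|A| + #|A|).+1 ^ r.+1)%:R : R.
have -> : (fun d => (bad_vertex_bound L r (nd d))%:R / (p d)%:R : R) =
    (fun d => c * (2 * ((prolongable_defect L (nd d))%:R / (p d)%:R) +
      2 * ((complexity L (nd d).+1 - p d)%N%:R / (p d)%:R) +
      (periodic_bound A r)%:R / (p d)%:R)).
  apply: funext => d /=; rewrite /bad_vertex_bound natrM natrD.
  by rewrite (natrD _ (2 * _)) !(natrM _ 2); ring.
have := cvgMl_tmp (a := c) (cvgD (cvgD
  (cvgMl_tmp (a := 2) prolongable_defect_ratio_cvg0) (cvgMl_tmp (a := 2) growth_cvg0))
  period_cvg0).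
by rewrite !mulr0 !addr0 mulr0 => lim_cvg0; exact: lim_cvg0.
Qed.

Lemma good_proportion_cvg1 r :
  (fun d => good_proportion R L (nd d) r) @ \oo --> (1 : R).
Proof.
apply: (@squeeze_cvgr _ _ _ _
  (fun d => 1 - (bad_vertex_bound L r (nd d))%:R / (p d)%:R) (fun=> 1)).
- by apply: nearW => d; apply: good_proportion_bounds; exact: leq_trans (nd_complexity d).
- by rewrite -[X in _ --> X](subr0 1); apply: cvgB (cvg_cst _) (bad_vertex_ratio_cvg0 r).
- exact: cvg_cst.
Qed.
End GoodProportion.

Theorem lemma2p5 (R : realType) (A : finType) (L : pred (seq A)) :
  factorial_language L ->
  almost_prolongable L R ->
  unbounded_complexity L ->
  subexponential L R ->
  exists nd : nat -> nat,
    (forall d, (0 < nd d)%N) /\ (forall d, (nd d < nd d.+1)%N) /\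
    rauzy_converges_to_Z R L nd.
Proof.
move=> L_factorial L_prolongable L_unbounded L_subexp.
have [nd [nd_gt nd_incr nd_slow]] :=
  increasing_choice (exists_slow_growth L_unbounded L_subexp).
exists nd; split; first by move=> d; exact: leq_ltn_trans (nd_gt d).
split => // r; apply: good_proportion_cvg1 => // d.
- exact: ltnW.
- by case: (nd_slow d).
- by case: (nd_slow d).
Qed.
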